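(* Let $mG^{(0)}$ be a finite canonical misinformation game, let $\mathcal{AD}^{\infty}(\{mG^{(0)}\})$ be the Stable Set of the Adaptation Procedure on $mG^{(0)}$, and let $\mathcal{T}$ be its terminal set. Then $$\mathcal{AD}^{\infty}(\{mG^{(0)}\}) = \mathcal{AD}^{*}(\mathcal{T}).$$
   Context: A normal-form game is $G=\langle N,S,P\rangle$ with a finite set of players $N$, finite pure strategy sets $S_i$ ($i\in N$), set of pure strategy profiles (positions) $S=\times_{i\in N}S_i$, and payoffs $P=(P_i)_{i\in N}$ with $P_i:S\to\mathbb{R}$. A misinformation game is a tuple $mG=\langle G^0,G^1,\dots,G^{|N|}\rangle$ of normal-form games, $G^0$ (the actual game) having $|N|$ players; $G^i$ is the subjective game of player $i$. It is canonical if every $G^i$ differs from $G^0$ only in its payoffs (so $G^i=\langle N,S,P^i\rangle$ for all $i$) and in every $G^i$ all players have the same number of pure strategies. A misinformed strategy profile $\sigma=(\sigma_1,\dots,\sigma_{|N|})$ is a natural misinformed equilibrium (nme) if for each $i$, $\sigma_i$ is player $i$'s component of some (mixed) Nash equilibrium of $G^i$; $NME(mG)$ denotes the set of these. For a profile $\sigma$, $\chi(\sigma)=\mathrm{supp}(\sigma_1)\times\dots\times\mathrm{supp}(\sigma_{|N|})\subseteq S$. For a position $\vec v\in S$, the $\vec v$-update $mG_{\vec v}$ is the misinformation game $\langle G^0,G'^1,\dots,G'^{|N|}\rangle$ where $G'^i=\langle N,S,P'^i\rangle$ with $P'^i(\vec v)=P^0(\vec v)$ (the whole payoff vector) and $P'^i(\vec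 u)=P^i(\vec u)$ for $\vec u\neq\vec v$. For a set $M$ of misinformation games, $\mathcal{AD}(M)=\{mG_{\vec u}: mG\in M,\ \sigma\in NME(mG),\ \vec u\in\chi(\sigma)\}$; $\mathcal{AD}^{(0)}(M)=M$ and $\mathcal{AD}^{(t+1)}(M)=\mathcal{AD}^{(t)}(\mathcal{AD}(M))$. The procedure terminates at the smallest $t\ge0$ with $\mathcal{AD}^{(t+1)}(M)=\mathcal{AD}^{(t)}(M)$; this $t$ is the length $\mathfrak{L}$, and $\mathcal{AD}^{\infty}(M)=\mathcal{AD}^{(\mathfrak{L})}(M)$ is the Stable Set. $\mathcal{AD}^{*}(M)=\bigcup_{t\ge0}\mathcal{AD}^{(t)}(M)$. The terminal set of the Adaptation Procedure on $mG^{(0)}$ is $\mathcal{T}=\{mG\in\mathcal{AD}^*(\{mG^{(0)}\}) : mG\in\mathcal{AD}(\{mG\})\}$. *)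

From HB Require Import structures.
From mathcomp Require Import all_boot all_order all_algebra.
From mathcomp Require Import classical_sets reals.
Set Implicit Arguments. Unset Strict Implicit. Unset Printing Implicit Defensive.
Import Order.TTheory GRing.Theory Num.Theory.
Local Open Scope ring_scope.
Local Open Scope classical_set_scope.

Section MisinfoGames.
Variables (R : realType) (n : nat) (S : 'I_n -> finType).

(* Players are N = 'I_n; player i has pure strategy set S i.
   Positions (pure strategy profiles) S = prod_i S_i. *)
Definition position := {dffun forall i : 'I_n, S i}.

(* A payoff function P = (P_i)_{i in N} : S -> R^N.  Since in a canonical
   misinformation game all G^i share N and S with G^0, a game is
   determined by its payoff function. *)
Definition payoff := position -> 'I_n -> R.

(* Canonical misinformation game <G^0, G^1, ..., G^|N|>:
   mg_act = payoff of the actual game G^0,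
   mg_subj i = payoff of the subjective game G^i of player i. *)
Record mgame := MGame { mg_act : payoff ; mg_subj : 'I_n -> payoff }.

Definition mixed (T : finType) (x : {ffun T -> R}) : Prop :=
  (forall t, 0 <= x t) /\ \sum_(t : T) x t = 1.

Definition mprofile := forall i : 'I_n, {ffun S i -> R}.

Definition is_mprofile (sigma : mprofile) : Prop := forall i, mixed (sigma i).

Definition dev_payoff (P : payoff) (j : 'I_n) (sigma : mprofile)
  (tau : {ffun S j -> R}) : R :=
  \sum_(p : position) (tau (p j) * (\prod_(i | i != j) sigma i (p i)) * P p j).

Arguments dev_payoff P j sigma tau : clear implicits.

Definition exp_payoff (P : payoff) (j : 'I_n) (sigma : mprofile) : R :=
  dev_payoff P j sigma (sigma j).

Definition nash (P : payoff) (sigma : mprofile) : Prop :=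
  is_mprofile sigma /\
  forall (j : 'I_n) (tau : {ffun S j -> R}),
    mixed tau -> dev_payoff P j sigma tau <= exp_payoff P j sigma.

Definition NME (mG : mgame) : set mprofile :=
  [set sigma | forall i : 'I_n,
     exists sigma', nash (mg_subj mG i) sigma' /\ sigma' i = sigma i].

Definition chi (sigma : mprofile) : set position :=
  [set p | forall i : 'I_n, p i \in [set s | sigma i s != 0]%SET].

Definition update (mG : mgame) (v : position) : mgame :=
  MGame (mg_act mG)
        (fun i u => if u == v then mg_act mG v else mg_subj mG i u).

Definition AD (M : set mgame) : set mgame :=
  [set mG' | exists mG sigma u,
     [/\ M mG, NME mG sigma, chi sigma u & mG' = update mG u]].

Fixpoint ADn (t : nat) (M : set mgame) : set mgame :=
  match t with
  | 0 => M
  | t'.+1 => ADn t' (AD M)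
  end.

Definition is_length (M : set mgame) (L : nat) : Prop :=
  ADn L.+1 M = ADn L M /\ forall t, (t < L)%N -> ADn t.+1 M <> ADn t M.

Definition ADstar (M : set mgame) : set mgame :=
  [set mG | exists t, ADn t M mG].

Definition terminal (mG0 : mgame) : set mgame :=
  [set mG | ADstar [set mG0] mG /\ AD [set mG] mG].

End MisinfoGames.

From HB Require Import structures.
From mathcomp Require Import all_boot all_order all_algebra.
From mathcomp Require Import boolp classical_sets reals.
Set Implicit Arguments. Unset Strict Implicit.
Local Open Scope classical_set_scope.

(* Let X be the Stable Set, so AD X = X.  A terminal game, once reached at
   some stage, stays at every later stage, hence lies in X; since X is a
   fixed point of the monotone operator AD, AD^*(T) is contained in X.
   Conversely every g in X is an update g = g'_u of some g' in X.  An update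
   either leaves g' unchanged, and then g is terminal, or strictly enlarges
   the finite set of positions at which subjective and actual payoffs agree;
   induction on the size of that set puts every g in X into AD^*(T). *)

Section AdaptationProcedure.
Variables (R : realType) (n : nat) (S : 'I_n -> finType).
Implicit Types (M N : set (mgame R S)) (g : mgame R S).

Lemma ADnS M t : ADn t.+1 M = AD (ADn t M).
Proof. by elim: t M => [//|t IH] M /=; rewrite -IH. Qed.

Lemma ADnD M s t : ADn (s + t) M = ADn t (ADn s M).
Proof. by elim: s M => [//|s IH] M; rewrite addSn /= IH. Qed.

Lemma AD_mono M N : M `<=` N -> AD M `<=` AD N.
Proof. by move=> MN g [g' [sigma [u [/MN Ng' *]]]]; exists g', sigma, u. Qed.

Lemma ADn_mono t M N : M `<=` N -> ADn t M `<=` ADn t N.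
Proof. by move=> MN; elim: t => [//|t IH]; rewrite !ADnS; apply: AD_mono. Qed.

Lemma ADn_fix t M : AD M = M -> ADn t M = M.
Proof. by move=> fixM; elim: t => [//|t IH]; rewrite ADnS IH. Qed.

Lemma ADstar_sub_fix M N : AD N = N -> M `<=` N -> ADstar M `<=` N.
Proof. by move=> fixN MN g [t]; rewrite -(ADn_fix t fixN); apply: ADn_mono. Qed.

Lemma ADn_persist t M g : AD [set g] g -> M g -> ADn t M g.
Proof.
move=> ADg; elim: t M => [//|t IH] M Mg /=; apply: IH.
by apply: AD_mono ADg => _ ->.
Qed.

Lemma terminal_sub_stable (mG0 : mgame R S) L :
  ADn L.+1 [set mG0] = ADn L [set mG0] -> terminal mG0 `<=` ADn L [set mG0].
Proof.
move=> stable g [[k Mkg] ADg].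
have fixL : AD (ADn L [set mG0]) = ADn L [set mG0] by rewrite -ADnS.
by rewrite -(ADn_fix k fixL) -ADnD addnC ADnD; apply: ADn_persist.
Qed.

Definition agree_set g : {set position S} :=
  [set u | [forall i, forall j, mg_subj g i u j == mg_act g u j]].

Lemma agree_set_update g u : agree_set (update g u) = (u |: agree_set g)%SET.
Proof.
apply/setP => v; rewrite !inE /=; case: eqP => [->|_] //=.
by apply/forallP => i; apply/forallP => j.
Qed.

Lemma update_id g u : u \in agree_set g -> update g u = g.
Proof.
case: g => a s; rewrite inE => /forallP agree_u; congr MGame.
apply/funext => i; apply/funext => v; case: eqP => [-> /=|//].
by apply/funext => j; apply/esym/eqP; move/forallP: (agree_u i).
Qed.

Lemma update_id_or_proper g u :
  update g u = g \/ (agree_set g \proper agree_set (update g u))%SET.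
Proof.
have [/update_id|u_notin] := boolP (u \in agree_set g); first by left.
by right; rewrite agree_set_update properUr // finset.sub1set.
Qed.

Lemma stable_sub_ADstar_terminal (mG0 : mgame R S) X :
  AD X = X -> X `<=` ADstar [set mG0] -> X `<=` ADstar (terminal mG0).
Proof.
move=> fixX reachX.
suff bounded m g : X g -> (#|agree_set g| < m)%N -> ADstar (terminal mG0) g.
  by move=> g Xg; apply: (bounded _ g Xg (ltnSn _)).
elim: m g => [//|m IH] g Xg.
have := Xg; rewrite -{1}fixX => -[g' [sigma [u [Xg' NMEg' chi_u ->]]]] ltm.
have [eq_g'|lt_agree] := update_id_or_proper g' u.
- exists 0; rewrite /= eq_g'; split; first exact: reachX.
  by exists g', sigma, u; rewrite eq_g'.
- have [t Tt] := IH g' Xg' (leq_trans (proper_card lt_agree) ltm).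
  by exists t.+1; rewrite ADnS; exists g', sigma, u.
Qed.

End AdaptationProcedure.

Theorem theorem1 (R : realType) (n : nat) (S : 'I_n -> finType)
  (hS : forall i, (0 < #|S i|)%N) (mG0 : mgame R S) (L : nat) :
  is_length [set mG0] L ->
  ADn L [set mG0] = ADstar (terminal mG0).
Proof.
(* [hS] only guarantees that equilibria exist; the argument never needs one. *)
move=> [stable _].
have fixL : AD (ADn L [set mG0]) = ADn L [set mG0] by rewrite -ADnS.
apply/seteqP; split.
- by apply: stable_sub_ADstar_terminal => // g Lg; exists L.
- by apply: (ADstar_sub_fix fixL); apply: terminal_sub_stable.
Qed.
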